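(* Let $Q\colon\mathbb{R}^p\to\mathbb{R}$ be a polynomial and let $P_1$ be a program on the dictionary $\mathcal{D}_1=\{+,\times,\mathrm{ReLU},+c,\times c\}$ such that $[P_1](x)=Q(x)$ for all $x$ in a nonempty open set $S\subset\mathbb{R}^p$. Then there is a program $P_2$ on the dictionary $\mathcal{D}=\{+,\times,+c,\times c\}$ such that $[P_2]=Q$ on all of $\mathbb{R}^p$. Furthermore, if $\mathrm{cost}(\mathrm{ReLU})=\mathrm{cost}(\times c)$, then $\mathrm{cost}(P_2)=\mathrm{cost}(P_1)$.
   Context: A program on a dictionary with $p$ inputs computes $x_i=g_i((x_j)_{j\in\mathrm{pr}(i)})$, $i=p+1,\dots,m$, with $g_i$ in the dictionary applied to earlier values ($j<i$), returning $x_m$; $[P]$ denotes the computed function and $\mathrm{cost}(P)=\sum_i\mathrm{cost}(g_i)$. $+c$ and $\times c$ denote addition and multiplication by a fixed real constant; $\mathrm{ReLU}(t)=\max(0,t)$. *)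

From HB Require Import structures.
From mathcomp Require Import all_boot all_order all_algebra.
From mathcomp Require Import Rstruct.
From mathcomp Require Import mpoly.
From Stdlib Require Import Rdefinitions.
Set Implicit Arguments. Unset Strict Implicit. Unset Printing Implicit Defensive.
Import Order.TTheory GRing.Theory Num.Theory.
Local Open Scope ring_scope.

(* Gates of the dictionary D1 = {+, *, ReLU, +c, *c}.  Arguments are indices
   (0-based) of earlier values x_0, ..., x_{k-1} (inputs are x_0..x_{p-1}). *)
Inductive gate : Type :=
  | GAdd  of nat & nat
  | GMul  of nat & nat
  | GReLU of nat
  | GAddc of R & nat
  | GMulc of R & nat.

Inductive gate_kind : Type := KAdd | KMul | KReLU | KAddc | KMulc.

Definition kind (g : gate) : gate_kind :=
  match g with
  | GAdd _ _ => KAdd | GMul _ _ => KMul | GReLU _ => KReLU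
  | GAddc _ _ => KAddc | GMulc _ _ => KMulc
  end.

Definition ReLU (t : R) : R := Num.max 0 t.

Definition program := seq gate.

Definition gate_wf (k : nat) (g : gate) : bool :=
  match g with
  | GAdd i j | GMul i j => (i < k)%nat && (j < k)%nat
  | GReLU i | GAddc _ i | GMulc _ i => (i < k)%nat
  end.

Fixpoint prog_wf_from (k : nat) (P : program) : bool :=
  match P with
  | [::] => true
  | g :: P' => gate_wf k g && prog_wf_from k.+1 P'
  end.

Definition prog_wf (p : nat) (P : program) : bool := prog_wf_from p P.

Definition no_relu (P : program) : bool := all (fun g => if kind g is KReLU then false else true) P.

Definition eval_gate (vals : seq R) (g : gate) : R :=
  match g with
  | GAdd i j => nth 0 vals i + nth 0 vals j
  | GMul i j => nth 0 vals i * nth 0 vals j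
  | GReLU i => ReLU (nth 0 vals i)
  | GAddc c i => nth 0 vals i + c
  | GMulc c i => c * nth 0 vals i
  end.

Fixpoint run (vals : seq R) (P : program) : seq R :=
  match P with
  | [::] => vals
  | g :: P' => run (rcons vals (eval_gate vals g)) P'
  end.

Definition prog_fun (p : nat) (P : program) (x : 'I_p -> R) : R :=
  last 0 (run [seq x i | i <- enum 'I_p] P).

Definition prog_cost (cost : gate_kind -> R) (P : program) : R :=
  \sum_(g <- P) cost (kind g).

Definition is_open (p : nat) (S : ('I_p -> R) -> Prop) : Prop :=
  forall x, S x -> exists2 e : R, 0 < e &
    forall y : 'I_p -> R, (forall i, `|y i - x i| < e) -> S y.

From HB Require Import structures.
From mathcomp Require Import all_boot all_order all_algebra.
From mathcomp Require Import Rstruct.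
From mathcomp Require Import mpoly.
From Stdlib Require Import Rdefinitions.
From mathcomp Require Import ring lra.
From Stdlib Require Import Classical FunctionalExtensionality.
From Stdlib Require List.
Import Order.TTheory GRing.Theory Num.Theory.
Local Open Scope ring_scope.
Set Implicit Arguments. Unset Strict Implicit. Unset Printing Implicit Defensive.

(* Call a function f : R^p -> R tame when it is continuous (for the sup-norm)
   and polynomial along every line t |-> a + t (x - a).  Tame functions contain
   the constants and the coordinates and are closed under + and *, so every
   polynomial and every value computed by a ReLU-free program is tame.  A
   function that is polynomial along lines and vanishes on a nonempty open set
   vanishes everywhere (identity principle), since a univariate polynomial with
   infinitely many roots is zero.

   ReLU elimination: scanning the program gate by gate while shrinking the open
   set, each ReLU gate applied to a tame value v either meets a point where
   v > 0 (then, by continuity, ReLU = 1 * v on a smaller open set) or v <= 0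
   holds everywhere on the current open set (then ReLU = 0 * v).  Replacing every
   ReLU by the corresponding gate *c gives a ReLU-free program P2 of the same
   cost when cost(ReLU) = cost( *c), agreeing with P1, hence with Q, on a
   nonempty open set.  Both P2 and Q are tame, so they agree everywhere. *)

Section TameFunctions.
Variable p : nat.
Local Notation vec := ('I_p -> R).

Definition continuous_sup (f : vec -> R) : Prop :=
  forall x (e : R), 0 < e -> exists2 d : R, 0 < d &
    forall y : vec, (forall i, `|y i - x i| < d) -> `|f y - f x| < e.

Definition poly_on_lines (f : vec -> R) : Prop :=
  forall a x : vec, exists q : {poly R},
    forall t, f (fun i => a i + t * (x i - a i)) = q.[t].

Definition tame (f : vec -> R) : Prop := continuous_sup f /\ poly_on_lines f.

Lemma tame_ext (f g : vec -> R) : tame f -> f =1 g -> tame g.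
Proof. by move=> tf /functional_extensionality <-. Qed.

Lemma tame_cst (c : R) : tame (fun=> c).
Proof.
split; first by move=> x e e0; exists 1 => // y _; rewrite subrr normr0.
by move=> a x; exists c%:P => t; rewrite hornerC.
Qed.

Lemma tame_coord (i : 'I_p) : tame (fun x => x i).
Proof.
split; first by move=> x e e0; exists e.
move=> a x; exists ((a i)%:P + (x i - a i)%:P * 'X) => t.
by rewrite hornerD hornerM hornerX !hornerC mulrC.
Qed.

Definition continuous2 (op : R -> R -> R) : Prop :=
  forall a b (e : R), 0 < e -> exists2 d : R, 0 < d &
    forall u v, `|u - a| < d -> `|v - b| < d -> `|op u v - op a b| < e.

Lemma continuous2_add : continuous2 +%R.
Proof.
move=> a b e e0; exists (e / 2) => [|u v hu hv]; first lra.
have -> : u + v - (a + b) = (u - a) + (v - b) by ring.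
have := ler_normD (u - a) (v - b); lra.
Qed.

(* |uv - ab| <= |u| |v - b| + |u - a| |b| <= d (|a| + 1 + |b|) when d <= 1. *)
Lemma continuous2_mul : continuous2 *%R.
Proof.
move=> a b e e0; set K := `|a| + `|b| + 1.
have K1 : 1 <= K by rewrite /K; have := normr_ge0 a; have := normr_ge0 b; lra.
set d := Num.min 1 (e / (2 * K)).
have d0 : 0 < d by rewrite lt_min ltr01 divr_gt0 //; lra.
have dK : d * K < e.
  have : d <= e / (2 * K) by rewrite ge_min lexx orbT.
  have : e / (2 * K) * K = e / 2 by field; lra.
  nra.
exists d => // u v hu hv /=.
have d1 : d <= 1 by rewrite ge_min lexx.
have -> : u * v - a * b = u * (v - b) + (u - a) * b by ring.
have hsum := ler_normD (u * (v - b)) ((u - a) * b); rewrite !normrM in hsum.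
have hua : `|u| <= `|a| + `|u - a|.
  by have := ler_normD a (u - a); rewrite addrC subrK.
have := normr_ge0 u; have := normr_ge0 (u - a); have := normr_ge0 (v - b).
have := normr_ge0 b; rewrite /K in dK; nra.
Qed.

Lemma continuous_sup_op (op : R -> R -> R) (f g : vec -> R) :
  continuous2 op -> continuous_sup f -> continuous_sup g ->
  continuous_sup (fun x => op (f x) (g x)).
Proof.
move=> cop cf cg x e e0.
have [d d0 hop] := cop (f x) (g x) e e0.
have [df df0 hf] := cf x d d0; have [dg dg0 hg] := cg x d d0.
exists (Num.min df dg) => [|y hy]; first by rewrite lt_min df0 dg0.
by apply: hop; [apply: hf | apply: hg] => i; have := hy i; rewrite lt_min => /andP[].
Qed.

Lemma tame_add (f g : vec -> R) : tame f -> tame g -> tame (fun x => f x + g x).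
Proof.
move=> [cf pf] [cg pg]; split; first exact: continuous_sup_op continuous2_add cf cg.
move=> a x; have [q1 E1] := pf a x; have [q2 E2] := pg a x.
by exists (q1 + q2) => t; rewrite hornerD E1 E2.
Qed.

Lemma tame_mul (f g : vec -> R) : tame f -> tame g -> tame (fun x => f x * g x).
Proof.
move=> [cf pf] [cg pg]; split; first exact: continuous_sup_op continuous2_mul cf cg.
move=> a x; have [q1 E1] := pf a x; have [q2 E2] := pg a x.
by exists (q1 * q2) => t; rewrite hornerM E1 E2.
Qed.

Lemma tame_sum (I : Type) (r : seq I) (F : I -> vec -> R) :
  (forall i, tame (F i)) -> tame (fun x => \sum_(i <- r) F i x).
Proof.
move=> tF; elim: r => [|i r IH].
  by apply: (tame_ext (tame_cst 0)) => x; rewrite big_nil.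
by apply: (tame_ext (tame_add (tF i) IH)) => x; rewrite big_cons.
Qed.

Lemma tame_prod (I : Type) (r : seq I) (F : I -> vec -> R) :
  (forall i, tame (F i)) -> tame (fun x => \prod_(i <- r) F i x).
Proof.
move=> tF; elim: r => [|i r IH].
  by apply: (tame_ext (tame_cst 1)) => x; rewrite big_nil.
by apply: (tame_ext (tame_mul (tF i) IH)) => x; rewrite big_cons.
Qed.

Lemma tame_exp (f : vec -> R) (n : nat) : tame f -> tame (fun x => f x ^+ n).
Proof.
move=> tf; elim: n => [|n IH]; first exact: tame_ext (tame_cst 1) _.
by apply: (tame_ext (tame_mul tf IH)) => x; rewrite exprS.
Qed.

(* Polynomial functions are tame: expand Q as a sum of monomials. *)
Lemma tame_meval (Q : {mpoly R[p]}) : tame (fun x => Q.@[x]).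
Proof.
apply: (tame_ext (f := fun x => \sum_(m <- msupp Q) Q@_m * \prod_i x i ^+ m i));
  last by move=> x; rewrite mevalE.
apply: tame_sum => m; apply: tame_mul; first exact: tame_cst.
by apply: tame_prod => i; apply: tame_exp; apply: tame_coord.
Qed.

End TameFunctions.

(* A univariate polynomial vanishing on a neighbourhood [-d, d] of 0 is zero:
   otherwise the size q distinct points d / (k + 1), k < size q, would be too
   many roots. *)
Lemma poly_eq0_near0 (q : {poly R}) (d : R) :
  0 < d -> (forall t, `|t| <= d -> q.[t] = 0) -> q = 0.
Proof.
move=> d0 hq; apply/eqP; apply: contraT => nq.
set rs := [seq d / (k.+1)%:R | k <- iota 0 (size q)].
suff : leq (size rs).+1 (size q) by rewrite /rs size_map size_iota ltnn.
apply: max_poly_roots nq _ _.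
  apply/allP => t /mapP[k _ ->]; apply/eqP; apply: hq.
  rewrite normrM normfV gtr0_norm // normr_nat ler_pdivrMr ?ltr0Sn //.
  have : 1 <= (k.+1)%:R :> R by rewrite ler1n.
  nra.
rewrite map_inj_uniq ?iota_uniq // => k l /(mulfI (lt0r_neq0 d0))/invr_inj/eqP.
by rewrite eqr_nat eqSS => /eqP.
Qed.

Section IdentityPrinciple.
Variable p : nat.
Local Notation vec := ('I_p -> R).

Definition open_in (U' U : vec -> Prop) : Prop :=
  [/\ is_open U', (exists x, U' x) & forall x, U' x -> U x].

Lemma open_in_trans (U'' U' U : vec -> Prop) :
  open_in U'' U' -> open_in U' U -> open_in U'' U.
Proof. by move=> [o'' ne'' s''] [_ _ s']; split => // x /s''/s'. Qed.

Lemma line_near (a x : vec) (e : R) : 0 < e ->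
  exists2 d : R, 0 < d &
    forall t, `|t| <= d -> forall i, `|(a i + t * (x i - a i)) - a i| < e.
Proof.
move=> e0; set S := \sum_i `|x i - a i|.
have S0 : 0 <= S by apply: sumr_ge0 => i _; apply: normr_ge0.
have Si : forall i, `|x i - a i| <= S.
  move=> i; rewrite /S (bigD1 i) //= lerDl.
  by apply: sumr_ge0 => j _; apply: normr_ge0.
have hd : e / (2 * (1 + S)) * (1 + S) = e / 2 by field; lra.
exists (e / (2 * (1 + S))) => [|t ht i]; first by apply: divr_gt0 => //; lra.
rewrite addrC addKr normrM.
have := Si i; have := normr_ge0 t; have := normr_ge0 (x i - a i); nra.
Qed.

Lemma identity_principle (f g : vec -> R) (U : vec -> Prop) :
  poly_on_lines f -> poly_on_lines g -> is_open U -> (exists a, U a) ->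
  (forall x, U x -> f x = g x) -> f =1 g.
Proof.
move=> pf pg oU [a Ua] hU x.
have [e e0 ballU] := oU a Ua.
have [d d0 near] := line_near a x e0.
have [qf Ef] := pf a x; have [qg Eg] := pg a x.
have qfg : qf - qg = 0.
  apply: (poly_eq0_near0 d0) => t ht.
  by rewrite hornerD hornerN -Ef -Eg hU ?subrr //; apply: ballU; apply: near.
have line1 : x = (fun i => a i + 1 * (x i - a i)).
  by apply: functional_extensionality => i; rewrite mul1r addrC subrK.
by rewrite line1 Ef Eg; apply/eqP; rewrite -subr_eq0 -hornerN -hornerD qfg horner0.
Qed.

End IdentityPrinciple.

Definition relu_replacement (g g' : gate) : Prop :=
  (g' = g /\ kind g <> KReLU) \/ exists c i, g = GReLU i /\ g' = GMulc c i.

Definition relu_replaced (P P' : program) : Prop :=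
  List.Forall2 relu_replacement P P'.

Lemma relu_replaced_wf (P P' : program) (k : nat) :
  relu_replaced P P' -> prog_wf_from k P -> prog_wf_from k P'.
Proof.
move=> hs; elim: hs k => // g g' {}P {}P' hg _ IH k /= /andP[wg wP].
rewrite IH // andbT.
by case: hg wg => [[-> _]|[c [i [-> ->]]]].
Qed.

Lemma relu_replaced_no_relu (P P' : program) : relu_replaced P P' -> no_relu P'.
Proof.
elim=> // g g' {}P {}P' hg _ /= ->; rewrite andbT.
by case: hg => [[-> ]|[c [i [_ ->]]]] //; case: g.
Qed.

Lemma relu_replaced_cost (P P' : program) (cost : gate_kind -> R) :
  cost KReLU = cost KMulc -> relu_replaced P P' ->
  prog_cost cost P' = prog_cost cost P.
Proof.
move=> hc; elim=> // g g' {}P {}P' hg _ IH.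
rewrite /prog_cost !big_cons -/(prog_cost cost P) -/(prog_cost cost P') IH.
by case: hg => [[-> _]|[c [i [-> ->]]]] //=; rewrite hc.
Qed.

Section ReluElimination.
Variable p : nat.
Local Notation vec := ('I_p -> R).

Definition tame_vals (V : vec -> seq R) : Prop :=
  (exists k, forall x, size (V x) = k) /\ forall j, tame (fun x => nth 0 (V x) j).

Lemma tame_vals_inputs : tame_vals (fun x : vec => [seq x i | i <- enum 'I_p]).
Proof.
split=> [|j]; first by exists p => x; rewrite size_map size_enum_ord.
case: (ltnP j p) => hj.
  apply: (tame_ext (tame_coord (Ordinal hj))) => x.
  rewrite (nth_map (Ordinal hj)) ?size_enum_ord //; congr x; apply: val_inj.
  by rewrite /= nth_enum_ord.
apply: (tame_ext (tame_cst _ 0)) => x.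
by rewrite nth_default // size_map size_enum_ord.
Qed.

Lemma tame_vals_rcons (V : vec -> seq R) (h : vec -> R) :
  tame_vals V -> tame h -> tame_vals (fun x => rcons (V x) (h x)).
Proof.
move=> [[k hk] tV] th; split; first by exists k.+1 => x; rewrite size_rcons hk.
move=> j; apply: (tame_ext (f := fun x =>
  if (j < k)%nat then nth 0 (V x) j else if j == k then h x else 0));
  last by move=> x; rewrite nth_rcons hk.
case: ltnP => _; first exact: tV.
by case: eqP => _; [exact: th | exact: tame_cst].
Qed.

Lemma tame_gate (V : vec -> seq R) (g : gate) :
  tame_vals V -> kind g <> KReLU -> tame (fun x => eval_gate (V x) g).
Proof.
move=> [_ tV]; case: g => /= [i j|i j|i|c i|c i] // _.
- exact: tame_add.
- exact: tame_mul.
- exact: tame_add (tame_cst _ c).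
- exact: tame_mul (tame_cst _ c) _.
Qed.

Lemma tame_vals_run (P : program) (V : vec -> seq R) :
  no_relu P -> tame_vals V -> tame_vals (fun x => run (V x) P).
Proof.
elim: P V => [|g P IH] V //= /andP[hg hP] tV.
apply: (IH (fun x => rcons (V x) (eval_gate (V x) g))) => //.
by apply: tame_vals_rcons => //; apply: tame_gate => //; case: g hg.
Qed.

Lemma size_run (vals : seq R) (P : program) : size (run vals P) = (size vals + size P)%nat.
Proof.
elim: P vals => [|g P IH] vals /=; first by rewrite addn0.
by rewrite IH size_rcons addSnnS.
Qed.

Lemma tame_prog_fun (P : program) : no_relu P -> tame (@prog_fun p P).
Proof.
move=> nr; have [_ tV] := tame_vals_run nr tame_vals_inputs.
apply: (tame_ext (tV (p + size P).-1)) => x.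
by rewrite /prog_fun -nth_last size_run size_map size_enum_ord.
Qed.

Lemma open_pos (f : vec -> R) (U : vec -> Prop) :
  continuous_sup f -> is_open U -> is_open (fun y => U y /\ 0 < f y).
Proof.
move=> cf oU y [Uy fy].
have [e e0 ballU] := oU y Uy; have [d d0 hd] := cf y (f y) fy.
exists (Num.min e d) => [|z hz]; first by rewrite lt_min e0 d0.
have [hze hzd] : (forall i, `|z i - y i| < e) /\ (forall i, `|z i - y i| < d).
  by split=> i; have := hz i; rewrite lt_min => /andP[].
split; first exact: ballU.
by have := hd z hzd; rewrite ltr_norml => /andP[+ _]; lra.
Qed.

(* On some nonempty open subset of U, ReLU(f) coincides with c * f for a
   constant c (c = 1 near a point where f > 0, c = 0 if f <= 0 on U). *)
Lemma relu_linear_near (f : vec -> R) (U : vec -> Prop) :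
  continuous_sup f -> is_open U -> (exists x, U x) ->
  exists (c : R) (U' : vec -> Prop),
    open_in U' U /\ forall x, U' x -> ReLU (f x) = c * f x.
Proof.
move=> cf oU neU.
case: (classic (exists x0, U x0 /\ 0 < f x0)) => [[x0 hx0]|nopos].
  exists 1, (fun y => U y /\ 0 < f y); split.
    by split; [exact: open_pos | exists x0 | move=> x []].
  by move=> x [_ fx]; rewrite mul1r /ReLU max_r // ltW.
exists 0, U; split; first by split.
move=> x Ux; rewrite mul0r /ReLU max_l // leNgt; apply/negP => fx.
by apply: nopos; exists x.
Qed.

Lemma gate_replacement (V : vec -> seq R) (g : gate) (U : vec -> Prop) :
  tame_vals V -> is_open U -> (exists x, U x) ->
  exists g' (U' : vec -> Prop), [/\ relu_replacement g g', open_in U' U &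
    forall x, U' x -> eval_gate (V x) g = eval_gate (V x) g'].
Proof.
move=> tV oU neU.
case: g => [i j|i j|i|c i|c i]; try by eexists _, U; split => //; left.
have [c [U' [hU' hrelu]]] := relu_linear_near (proj1 (proj2 tV i)) oU neU.
by exists (GMulc c i), U'; split => //; right; exists c, i.
Qed.

Lemma relu_elimination (P : program) (V : vec -> seq R) (U : vec -> Prop) :
  tame_vals V -> is_open U -> (exists x, U x) ->
  exists P' (U' : vec -> Prop), [/\ relu_replaced P P', open_in U' U &
    forall x, U' x -> run (V x) P = run (V x) P'].
Proof.
elim: P V U => [|g P IH] V U tV oU neU.
  by exists [::], U; split => //; constructor.
have [g' [U1 [hg [oU1 neU1 sU1] eqg]]] := gate_replacement g tV oU neU.
have tV' : tame_vals (fun x => rcons (V x) (eval_gate (V x) g')).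
  apply: tame_vals_rcons (tame_gate tV _) => //.
  by case: hg => [[-> //]|[c [i [_ ->]]]].
have [P' [U' [hP hU' eqrun]]] := IH _ _ tV' oU1 neU1.
exists (g' :: P'), U'; split; first by constructor.
  exact: open_in_trans hU' (And3 oU1 neU1 sU1).
move=> x U'x /=; have [_ _ sU'] := hU'.
by rewrite eqg; [exact: eqrun | exact: sU'].
Qed.

End ReluElimination.

Theorem lemmaC1 (p : nat) (Q : {mpoly R[p]}) (P1 : program)
    (S : ('I_p -> R) -> Prop) :
  prog_wf p P1 ->
  is_open S -> (exists x, S x) ->
  (forall x, S x -> prog_fun P1 x = Q.@[x]) ->
  exists P2 : program,
    [/\ prog_wf p P2, no_relu P2,
        (forall x : 'I_p -> R, prog_fun P2 x = Q.@[x]) &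
        (forall cost : gate_kind -> R, cost KReLU = cost KMulc ->
           prog_cost cost P2 = prog_cost cost P1)].
Proof.
move=> wf oS neS hS.
have [P2 [U [hP2 [oU neU sU] agree]]] := relu_elimination P1 (tame_vals_inputs p) oS neS.
have nr := relu_replaced_no_relu hP2.
exists P2; split=> //.
- exact: relu_replaced_wf hP2 wf.
- move=> x; apply: (identity_principle (proj2 (tame_prog_fun p nr)) (proj2 (tame_meval Q)) oU neU).
  move=> y Uy; rewrite -(hS y (sU y Uy)).
  by rewrite /prog_fun (agree y Uy).
- by move=> cost hc; apply: relu_replaced_cost.
Qed.
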